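(* Let $\Delta\subset M_\mathbb{R}$ be a reflexive polytope with $\dim\Delta=\dim M_\mathbb{R}$, let $\{\Delta_1,\dots,\Delta_s\}$ be a nef-partition of $\Delta$ and $\{\nabla_1,\dots,\nabla_s\}$ its dual nef-partition. Let $p_i\in\nabla_i$ ($1\le i\le s$) with $\sum_{i=1}^sp_i=0$ and $\dim_\mathbb{R}\operatorname{Span}_\mathbb{R}\{p_1,\dots,p_s\}=s-r$. Then there exist pairwise disjoint nonempty sets $I_1,\dots,I_r$ with $\coprod_{k=1}^rI_k=\{1,\dots,s\}$ such that $\sum_{i\in I_k}p_i=0$ for each $k$. *)

(* M_R = N_R = 'rV[R]_d for R : realType, with the standard pairing. *)
From HB Require Import structures.
From mathcomp Require Import all_boot all_order all_algebra.
From mathcomp Require Import reals.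
Set Implicit Arguments. Unset Strict Implicit. Unset Printing Implicit Defensive.
Import Order.TTheory GRing.Theory Num.Theory.
Local Open Scope ring_scope.

Section Polytopes.
Variables (R : realType) (d : nat).
Local Notation vec := 'rV[R]_d.

Definition pairing (x y : vec) : R := \sum_(i < d) x ord0 i * y ord0 i.

Definition lattice_pt (x : vec) : Prop :=
  exists z : 'rV[int]_d, x = map_mx (fun n : int => n%:~R) z.

Definition conv_seq (S : seq vec) (x : vec) : Prop :=
  exists w : 'I_(size S) -> R,
    [/\ forall i, 0 <= w i, \sum_i w i = 1 & x = \sum_i w i *: S`_i].

Definition conv_hull (A : vec -> Prop) (x : vec) : Prop :=
  exists S : seq vec, (forall y, y \in S -> A y) /\ conv_seq S x.

Definition lattice_polytope (P : vec -> Prop) : Prop :=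
  exists S : seq vec, (forall y, y \in S -> lattice_pt y) /\
    forall x, P x <-> conv_seq S x.

Definition polar (P : vec -> Prop) (y : vec) : Prop :=
  forall x, P x -> -1 <= pairing x y.

Definition interior_pt (P : vec -> Prop) (x : vec) : Prop :=
  exists2 e : R, 0 < e & forall y : vec, (forall i, `|y ord0 i - x ord0 i| < e) -> P y.

(* dim P = d : P contains d+1 affinely independent points *)
Definition full_dim (P : vec -> Prop) : Prop :=
  exists (x0 : vec) (X : 'I_d -> vec),
    [/\ P x0, forall k, P (X k) & \rank (\matrix_(k < d) (X k - x0)) = d].

Definition reflexive_polytope (P : vec -> Prop) : Prop :=
  [/\ lattice_polytope P, interior_pt P 0 & lattice_polytope (polar P)].

Definition vertex (P : vec -> Prop) (v : vec) : Prop :=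
  P v /\ forall (y z : vec) (t : R), P y -> P z -> 0 < t < 1 ->
    v = t *: y + (1 - t) *: z -> y = v /\ z = v.

Definition dual_nef_partition (s : nat) (Dl : 'I_s -> vec -> Prop)
    (j : 'I_s) (y : vec) : Prop :=
  forall (i : 'I_s) (x : vec), Dl i x -> - ((i == j)%:R) <= pairing x y.

Definition minkowski_sum (s : nat) (Q : 'I_s -> vec -> Prop) (y : vec) : Prop :=
  exists q : 'I_s -> vec, (forall i, Q i (q i)) /\ y = \sum_i q i.

(* Batyrev--Borisov nef-partition of a reflexive polytope P:
   a partition E_1,...,E_s (nonempty parts) of the vertex set of P,
   Delta_i = Conv({0} u E_i), (so P = Conv(Delta_1 u ... u Delta_s)),
   and the nef (convexity) condition P^* = nabla_1 + ... + nabla_s. *)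
Definition nef_partition (s : nat) (P : vec -> Prop) (Dl : 'I_s -> vec -> Prop)
  : Prop :=
  exists E : 'I_s -> vec -> Prop,
    [/\ (forall i v, E i v -> vertex P v) /\
          (forall v, vertex P v -> exists! i, E i v),
        forall i, exists v, E i v,
        forall i x, Dl i x <-> conv_hull (fun y => y = 0 \/ E i y) x,
        forall x, P x <-> conv_hull (fun y => exists i, Dl i y) x &
        forall y, polar P y <-> minkowski_sum (dual_nef_partition Dl) y].

End Polytopes.

From HB Require Import structures.
From mathcomp Require Import all_boot all_order all_algebra.
From mathcomp Require Import reals.
From mathcomp Require Import ring lra zify.
Set Implicit Arguments. Unset Strict Implicit. Unset Printing Implicit Defensive.
Import Order.TTheory GRing.Theory Num.Theory.
Local Open Scope ring_scope.

(* Pair a point y of Delta_j with the p_i: the numbers <y, p_i> are >= 0 for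
   i <> j and sum to 0.  A set S of indices has sum_{i in S} p_i = 0 as soon as
   every such y pairs nonnegatively with it, because 0 is interior to Delta.
   From this, the zero-sum sets are closed under intersection, and for every
   linear relation sum_i c_i p_i = 0 the indices of a zero-sum set T where c
   is maximal on T again form a zero-sum set; peeling off maxima shows that
   every level set of c within T is zero-sum.  Intersecting the level sets of
   a basis of relations, the classes of indices on which all relations agree
   are zero-sum.  Their indicator vectors span the relation space, whose
   dimension is s - rank = r, so there are exactly r classes. *)


Section Pairing.
Variables (R : realType) (d : nat).
Implicit Types (x y : 'rV[R]_d).

Lemma pairingC x y : pairing x y = pairing y x.
Proof. by apply: eq_bigr => i _; rewrite mulrC. Qed.

Lemma pairing_sumr (I : finType) (P : {pred I}) (F : I -> 'rV[R]_d) x :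
  pairing x (\sum_(i in P) F i) = \sum_(i in P) pairing x (F i).
Proof.
rewrite /pairing; under eq_bigr do rewrite summxE mulr_sumr.
by rewrite exchange_big.
Qed.

Lemma pairing_scaler a x y : pairing x (a *: y) = a * pairing x y.
Proof. by rewrite /pairing mulr_sumr; apply: eq_bigr => i _; rewrite mxE; ring. Qed.

Lemma pairing_scalel a x y : pairing (a *: x) y = a * pairing x y.
Proof. by rewrite pairingC pairing_scaler pairingC. Qed.

Lemma pairing0r x : pairing x 0 = 0.
Proof. by rewrite -(scale0r 0) pairing_scaler mul0r. Qed.

Lemma pairing_delta (k : 'I_d) y : pairing (delta_mx 0 k) y = y 0 k.
Proof.
rewrite /pairing (bigD1 k) //= mxE !eqxx mul1r big1 ?addr0 // => i ik.
by rewrite mxE (negbTE ik) andbF mul0r.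
Qed.

Lemma conv_hull_pairing_ge0 (A : 'rV[R]_d -> Prop) y :
  (forall x, A x -> 0 <= pairing x y) ->
  forall x, conv_hull A x -> 0 <= pairing x y.
Proof.
move=> Ay x [S [SA [w [w_ge0 _ ->]]]].
rewrite pairingC pairing_sumr; apply: sumr_ge0 => i _.
by rewrite pairing_scaler pairingC mulr_ge0 // (Ay _ (SA _ (mem_nth 0 (ltn_ord i)))).
Qed.

(* The vectors [t e_k] with [|t|] small lie in [P], so [y 0 k] is both
   nonnegative and nonpositive. *)
Lemma interior0_pairing_ge0_eq0 (P : 'rV[R]_d -> Prop) y :
  interior_pt P 0 -> (forall x, P x -> 0 <= pairing x y) -> y = 0.
Proof.
move=> [e e_gt0 Pe] Py; apply/rowP => k; rewrite mxE.
have ge0 t : `|t| < e -> 0 <= t * y 0 k.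
  move=> te; rewrite -pairing_delta -pairing_scalel; apply/Py/Pe => i.
  by rewrite !mxE subr0; case: (_ && _); rewrite ?mulr1 ?mulr0 ?normr0.
have e2_gt0 : 0 < e / 2 by lra.
have e2_lt : `|e / 2| < e by rewrite ger0_norm; lra.
have := ge0 _ e2_lt; rewrite pmulr_rge0 // => y_ge0.
rewrite -normrN in e2_lt; have := ge0 _ e2_lt.
rewrite mulNr oppr_ge0 pmulr_rle0 // => y_le0.
by apply/eqP; rewrite eq_le y_le0 y_ge0.
Qed.

End Pairing.

Section NefPartition.
Variables (R : realType) (d s : nat) (Delta : 'rV[R]_d -> Prop).
Variables (Dl : 'I_s -> 'rV[R]_d -> Prop) (p : 'I_s -> 'rV[R]_d).
Hypothesis Delta0 : interior_pt Delta 0.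
Hypothesis Delta_conv : forall x, Delta x <-> conv_hull (fun y => exists i, Dl i y) x.
Hypothesis p_nabla : forall i, dual_nef_partition Dl i (p i).
Hypothesis p_sum0 : \sum_i p i = 0.

Implicit Types (S T : {set 'I_s}) (c : 'I_s -> R).

Definition zero_sum (S : {set 'I_s}) := \sum_(i in S) p i = 0.

Definition lin_relation (c : 'I_s -> R) := \sum_i c i *: p i = 0.

Lemma zero_sumP (S : {set 'I_s}) :
  (forall j y, Dl j y -> 0 <= \sum_(i in S) pairing y (p i)) -> zero_sum S.
Proof.
move=> S_ge0; apply: (interior0_pairing_ge0_eq0 Delta0) => x /Delta_conv.
by apply: conv_hull_pairing_ge0 => y [j Djy]; rewrite pairing_sumr; apply: S_ge0 Djy.
Qed.

Section PairingWithPoint.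
Variables (y : 'rV[R]_d) (j : 'I_s).
Hypothesis Djy : Dl j y.
Local Notation a i := (pairing y (p i)).

Lemma pairing_nabla_ge0 i : i != j -> 0 <= a i.
Proof. by move=> ij; have := p_nabla i Djy; rewrite eq_sym (negbTE ij) oppr0. Qed.

Lemma sum_pairing_lin_relation c : lin_relation c -> \sum_i c i * a i = 0.
Proof.
by move=> rc; under eq_bigr do rewrite -pairing_scaler; rewrite -pairing_sumr rc pairing0r.
Qed.

Lemma sum_pairing0 : \sum_i a i = 0.
Proof. by rewrite -pairing_sumr p_sum0 pairing0r. Qed.

Lemma sum_pairing_zero_sum S : zero_sum S -> \sum_(i in S) a i = 0.
Proof. by rewrite -pairing_sumr => ->; rewrite pairing0r. Qed.

Lemma sum_pairing_vanish_out S :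
  (forall i, i \notin S -> a i = 0) -> \sum_(i in S) a i = 0.
Proof.
move=> aS; rewrite -[RHS]sum_pairing0 big_mkcond /=.
by apply: eq_bigr => i _; case: ifP => // /negbT /aS.
Qed.

Lemma sum_pairing_ge0_out S : j \notin S -> 0 <= \sum_(i in S) a i.
Proof.
move=> jS; apply: sumr_ge0 => i iS; apply: pairing_nabla_ge0.
by apply: contraNneq jS => <-.
Qed.

Lemma pairing_zero_sum_out S i : zero_sum S -> j \in S -> i \notin S -> a i = 0.
Proof.
move=> S0 jS iS; have : \sum_(i | i \notin S) a i = 0.
  move: sum_pairing0.
  by rewrite (bigID (fun k => k \in S)) /= sum_pairing_zero_sum // add0r.
move/psumr_eq0P; apply=> // k kS; apply: pairing_nabla_ge0.
by apply: contraNneq kS => ->.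
Qed.

End PairingWithPoint.

Lemma zero_sumT : zero_sum [set: 'I_s].
Proof. by rewrite /zero_sum -[RHS]p_sum0 (eq_bigl xpredT) // => i; rewrite inE. Qed.

Lemma zero_sumI S T : zero_sum S -> zero_sum T -> zero_sum (S :&: T).
Proof.
move=> S0 T0; apply: zero_sumP => j y Djy.
have [/setIP [jS jT] | jST] := boolP (j \in S :&: T).
  rewrite sum_pairing_vanish_out // => i; rewrite inE negb_and => /orP [iS | iT].
    exact: pairing_zero_sum_out S0 jS iS.
  exact: pairing_zero_sum_out T0 jT iT.
by apply: (sum_pairing_ge0_out Djy).
Qed.

(* For [y] in [Delta_j] with [j] maximising [c], the nonnegative terms
   [(c j - c i) <y, p_i>] sum to zero, so [y] is orthogonal to every [p_i]
   with [c i < c j]. *)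
Lemma zero_sum_argmax T c : zero_sum T -> lin_relation c ->
  zero_sum [set i in T | [forall l in T, c l <= c i]].
Proof.
move=> T0 rc; apply: zero_sumP => j y Djy; set M := [set i in T | _].
have [jM | jM] := boolP (j \in M); last by apply: (sum_pairing_ge0_out Djy).
move: (jM); rewrite inE => /andP [jT /forall_inP jmax].
have outT i : i \notin T -> pairing y (p i) = 0 := pairing_zero_sum_out Djy T0 jT.
have cT : \sum_(i in T) c i * pairing y (p i) = 0.
  rewrite -[RHS](sum_pairing_lin_relation y rc) [RHS](bigID (fun i => i \in T)) /=.
  by rewrite [X in _ + X]big1 ?addr0 // => i /outT ->; rewrite mulr0.
have gap : \sum_(i in T) (c j - c i) * pairing y (p i) = 0.
  under eq_bigr do rewrite mulrBl.
  by rewrite sumrB -mulr_sumr sum_pairing_zero_sum // cT mulr0 subr0.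
rewrite sum_pairing_vanish_out // => i iM.
have [iT | ] := boolP (i \in T); last exact: outT.
have /eqP : (c j - c i) * pairing y (p i) = 0.
  apply: (psumr_eq0P _ gap) iT => k kT.
  have [-> | kj] := eqVneq k j; first by rewrite subrr mul0r.
  by rewrite mulr_ge0 ?subr_ge0 ?jmax // (pairing_nabla_ge0 Djy).
rewrite mulf_eq0 subr_eq0 => /orP [/eqP cji | /eqP //].
move: iM; rewrite inE iT /= => /negP []; apply/forall_inP => l lT.
by rewrite -cji jmax.
Qed.

Lemma zero_sum_level T c i0 : zero_sum T -> lin_relation c -> i0 \in T ->
  zero_sum [set i in T | c i0 == c i].
Proof.
elim: {T}_.+1 {-2}T (ltnSn #|T|) => // n IHn T Tn T0 rc i0T.
set M := [set i in T | [forall l in T, c l <= c i]].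
have M0 : zero_sum M := zero_sum_argmax T0 rc.
have MT : M \subset T by apply/subsetP => i; rewrite inE => /andP [].
have [i0M | i0M] := boolP (i0 \in M).
  move: i0M; rewrite inE => /andP [_ /forall_inP i0max].
  suff -> : [set i in T | c i0 == c i] = M by [].
  apply/setP => i; rewrite !inE; have [iT | //] := boolP (i \in T).
  apply/eqP/forall_inP => [<- // | imax].
  by apply/eqP; rewrite eq_le i0max // imax.
have [i1 i1T i1max] :=
  @real_arg_maxP _ _ i0 (mem T) c i0T (fun i _ => num_real (c i)).
have i1M : i1 \in M by rewrite inE; apply/andP; split => //; apply/forall_inP.
have TM0 : zero_sum (T :\: M).
  by move: T0; rewrite /zero_sum (big_setID M) /= (setIidPr MT) M0 add0r.
have TMn : (#|T :\: M| < n)%N.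
  rewrite -ltnS (leq_trans _ Tn) // ltnS proper_card //.
  by apply/properP; split; [exact: subsetDl | exists i1; rewrite // inE i1M].
have := IHn _ TMn TM0 rc (_ : i0 \in T :\: M).
suff -> : [set i in T :\: M | c i0 == c i] = [set i in T | c i0 == c i].
  by apply; rewrite inE i0M.
apply/setP => i; rewrite !inE -andbA; case: (i \in T) => //=.
case: eqP => [<- | _]; last by rewrite andbF.
by rewrite andbT; move: i0M; rewrite inE i0T.
Qed.

Lemma zero_sum_col_class m (K : 'M[R]_(m, s)) B :
  (forall k, lin_relation (fun i => K k i)) ->
  B \in preim_partition (fun j => col j K) [set: 'I_s] -> zero_sum B.
Proof.
move=> rK /imsetP [i _ ->].
have -> : [set j in [set: 'I_s] | col i K == col j K] =
          \bigcap_k [set j in [set: 'I_s] | K k i == K k j].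
  apply/setP => j; rewrite inE in_setT /=; apply/eqP/bigcapP => [ij k _ | ij].
    by move/colP: ij => /(_ k); rewrite !mxE inE in_setT => ->; rewrite eqxx.
  by apply/colP => k; have := ij k isT; rewrite !inE !mxE => /eqP.
apply: (big_ind zero_sum zero_sumT zero_sumI) => k _.
exact: zero_sum_level zero_sumT (rK k) (in_setT i).
Qed.

End NefPartition.

Lemma preim_partition_eq (T : finType) (rT : eqType) (f : T -> rT) (D : {set T}) :
  forall B, B \in preim_partition f D -> {in B &, forall i j, f i = f j}.
Proof.
by move=> _ /imsetP [x _ ->] i j; rewrite !inE => /andP [_ /eqP <-] /andP [_ /eqP <-].
Qed.

Lemma partition_family (T : finType) (Q : {set {set T}}) (D : {set T}) r :
  partition Q D -> #|Q| = r ->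
  exists I : 'I_r -> {set T},
    [/\ forall k, I k \in Q, forall k, I k != set0,
        forall k l, k != l -> [disjoint I k & I l] & \bigcup_(k < r) I k = D].
Proof.
move=> /and3P [/eqP coverQ trivQ Q0] <-; exists enum_val; split.
- exact: enum_valP.
- by move=> k; apply: contraNneq Q0 => <-; apply: enum_valP.
- move=> k l kl; apply: (trivIsetP trivQ) (enum_valP k) (enum_valP l) _.
  by rewrite (inj_eq enum_val_inj).
- by rewrite -coverQ /cover (big_enum_val (fun B => B)).
Qed.

Section PartitionMatrix.
Variables (F : fieldType) (n : nat) (Q : {set {set 'I_n}}).
Hypothesis partQ : partition Q [set: 'I_n].
Local Notation block q := (@enum_val _ (mem Q) q : {set 'I_n}).

Definition partition_mx : 'M[F]_(#|Q|, n) := \matrix_(q, j) (j \in block q)%:R.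

(* Each block is nonempty, so [pick] selects a representative of it. *)
Definition partition_rep_mx : 'M[F]_(n, #|Q|) :=
  \matrix_(j, q) ([pick i in block q] == Some j)%:R.

Lemma block_mem j : exists2 q, j \in block q & forall q', (j \in block q') = (q' == q).
Proof.
have [/eqP coverQ trivQ _] := and3P partQ.
have /bigcupP [B BQ jB] : j \in cover Q by rewrite coverQ.
exists (enum_rank_in BQ B) => [|q']; first by rewrite enum_rankK_in.
apply/idP/eqP => [jq' | ->]; last by rewrite enum_rankK_in.
apply: enum_val_inj; rewrite enum_rankK_in //.
by rewrite -(def_pblock trivQ (enum_valP q') jq') (def_pblock trivQ BQ jB).
Qed.

Lemma partition_mx_repK : partition_mx *m partition_rep_mx = 1%:M.
Proof.
apply/matrixP => q q'; rewrite !mxE; under eq_bigr do rewrite !mxE.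
case: pickP => [j0 j0q' | no_q']; last first.
  have [_ _ Q0] := and3P partQ; have /set0Pn [j jq'] : block q' != set0.
    by apply: contraNneq Q0 => <-; apply: enum_valP.
  by have := no_q' j; rewrite jq'.
rewrite (bigD1 j0) //= eqxx mulr1 big1 ?addr0 => [|j j_neq]; last first.
  by rewrite eq_sym (inj_eq Some_inj) (negbTE j_neq) mulr0.
have [q0 _ uniq_q0] := block_mem j0.
have q'q0 : q' == q0 by rewrite -uniq_q0.
by rewrite uniq_q0 (eqP q'q0).
Qed.

Lemma rank_partition_mx : \rank partition_mx = #|Q|.
Proof.
apply/eqP; rewrite eqn_leq rank_leq_row /=.
by have := mxrankM_maxl partition_mx partition_rep_mx; rewrite partition_mx_repK mxrank1.
Qed.

Variables (m : nat) (K : 'M[F]_(m, n)).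
Hypothesis K_const : forall B, B \in Q -> {in B &, forall i j, col i K = col j K}.

Lemma partition_rep_mxK : K *m partition_rep_mx *m partition_mx = K.
Proof.
apply/matrixP => k j; rewrite !mxE.
have [q0 jq0 uniq_q0] := block_mem j.
rewrite (bigD1 q0) //= big1 ?addr0 => [|q q_neq]; last first.
  by rewrite !mxE uniq_q0 (negbTE q_neq) mulr0.
rewrite !mxE jq0 mulr1; under eq_bigr do rewrite mxE.
case: pickP => [j0 j0q0 | /(_ j)]; last by rewrite jq0.
rewrite (bigD1 j0) //= eqxx mulr1 big1 ?addr0 => [|i i_neq]; last first.
  by rewrite (inj_eq Some_inj) eq_sym (negbTE i_neq) mulr0.
by move/colP: (K_const (enum_valP q0) j0q0 jq0) => /(_ k); rewrite !mxE.
Qed.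

Lemma submx_partition_mx : (K <= partition_mx)%MS.
Proof. by rewrite -partition_rep_mxK submxMl. Qed.

End PartitionMatrix.

Theorem lemma4p1 (R : realType) (d s r : nat) (Delta : 'rV[R]_d -> Prop)
    (Dl : 'I_s -> 'rV[R]_d -> Prop) (p : 'I_s -> 'rV[R]_d) :
  reflexive_polytope Delta -> full_dim Delta -> nef_partition Delta Dl ->
  (forall i, dual_nef_partition Dl i (p i)) ->
  \sum_(i < s) p i = 0 ->
  (\rank (\matrix_(i < s) p i))%:Z = s%:Z - r%:Z ->
  exists I : 'I_r -> {set 'I_s},
    [/\ forall k, I k != set0,
        forall k l, k != l -> [disjoint I k & I l],
        \bigcup_(k < r) I k = [set: 'I_s] &
        forall k, \sum_(i in I k) p i = 0].
Proof.
move=> [_ Delta0 _] _ [_ [_ _ _ Delta_conv _]] p_nabla p_sum0 rank_p.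
set P := \matrix_(i < s) p i; set K := kermx P.
have K_rel k : lin_relation p (fun i => K k i).
  have := congr1 (row k) (mulmx_ker P); rewrite row_mul row0 mulmx_sum_row.
  rewrite /lin_relation => kerP; rewrite -[RHS]kerP.
  by apply: eq_bigr => i _; rewrite rowK [in RHS]mxE.
set Q := preim_partition (fun j => col j K) [set: 'I_s].
have partQ : partition Q [set: 'I_s] := preim_partitionP _ _.
have Q0 B : B \in Q -> zero_sum p B :=
  zero_sum_col_class Delta0 Delta_conv p_nabla p_sum0 K_rel.
have Q_K : (partition_mx R Q <= K)%MS.
  rewrite sub_kermx; apply/eqP/row_matrixP => q; rewrite row_mul row0 mulmx_sum_row.
  rewrite -[RHS](Q0 _ (enum_valP q)) [RHS]big_mkcond; apply: eq_bigr => j _.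
  by rewrite rowK !mxE; case: (_ \in _); rewrite ?scale1r ?scale0r.
have K_Q : (K <= partition_mx R Q)%MS :=
  submx_partition_mx partQ (@preim_partition_eq _ _ _ _).
have cardQ : #|Q| = r.
  have : \rank K = #|Q|.
    by rewrite -(rank_partition_mx R partQ); apply/eqP; rewrite eqn_leq !mxrankS.
  rewrite mxrank_ker; have := rank_leq_row P; move: rank_p; rewrite -/P; lia.
have [I [IQ I0 I_disj I_cover]] := partition_family partQ cardQ.
by exists I; split => // k; apply: Q0.
Qed.
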